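(* There is an online algorithm for the online covering problem that maintains a nondecreasing $x\in\mathbb{R}^n_{\ge 0}$ satisfying all arrived constraints, whose final objective value satisfies $\langle c,x\rangle\le O(\log n)\cdot\mathsf{OPT}$, and such that the number of arriving constraints on which the algorithm performs an update (i.e., constraints found violated when processed) is at most $\mathrm{poly}(n,\log\mathsf{OPT},\log(1/\alpha_1))$, where $\alpha_1=\min_{j\in[n]}\{c_j/a_{1j}: a_{1j}>0\}$.
   Context: Online covering problem: the LP is $\min \langle c,x\rangle$ over $x\in\mathbb{R}^n_{\ge0}$ subject to $Ax\ge \mathbf{1}$, where $A\in\mathbb{R}^{m\times n}_{\ge 0}$, $c\in\mathbb{R}^n_{>0}$ is known in advance, and $\mathbf{1}$ is the all-ones vector. The rows of $A$ arrive one at a time (the number $m$ may be unknown); in round $i$ the entries $a_{i1},\dots,a_{in}$ are revealed, at least one of them positive, and the algorithm must increase $x$ monotonically (coordinates never decrease) so that $\sum_j a_{ij}x_j\ge 1$. $\mathsf{OPT}$ denotes the optimal value of the LP. *)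

From mathcomp Require Import all_boot all_order all_algebra.
From mathcomp Require Import all_classical all_reals all_analysis.
Set Implicit Arguments. Unset Strict Implicit. Unset Printing Implicit Defensive.
Import Order.TTheory GRing.Theory Num.Theory.
Local Open Scope ring_scope.
Local Open Scope classical_set_scope.

Definition dotv {R : realType} {n : nat} (a x : 'I_n -> R) : R :=
  \sum_(j < n) a j * x j.

Definition feasible {R : realType} {n : nat} (s : seq ('I_n -> R))
  (x : 'I_n -> R) : Prop :=
  (forall j, 0 <= x j) /\ (forall i, (i < size s)%N -> 1 <= dotv (nth (fun=> 0) s i) x).

Definition OPT {R : realType} {n : nat} (c : 'I_n -> R) (s : seq ('I_n -> R))
  : R := inf [set dotv c x | x in feasible s].

Definition alpha1 {R : realType} {n : nat} (c a1 : 'I_n -> R) : R :=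
  inf [set c j / a1 j | j in [set j | 0 < a1 j]].

(* A (deterministic) online algorithm: knowing n and c in advance, it maps
   the prefix of constraint rows revealed so far to its current solution x.
   Since the output after round t is a function of the first t rows only,
   the algorithm is online; the number m of rows is never given to it. *)
Definition online_alg (R : realType) :=
  forall n : nat, ('I_n -> R) -> seq ('I_n -> R) -> ('I_n -> R).

Definition valid_instance {R : realType} {n : nat} (c : 'I_n -> R)
  (s : seq ('I_n -> R)) : Prop :=
  (forall j, 0 < c j) /\
  (forall i, (i < size s)%N ->
     (forall j, 0 <= nth (fun=> 0) s i j) /\ (exists j, 0 < nth (fun=> 0) s i j)).

Definition num_updates {R : realType} (alg : online_alg R) {n : nat}
  (c : 'I_n -> R) (s : seq ('I_n -> R)) : nat :=
  #|[set t : 'I_(size s) |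
      `[< dotv (nth (fun=> 0) s t) (alg n c (take t s)) < 1 >] ]|.

From mathcomp Require Import all_boot all_order all_algebra.
From mathcomp Require Import all_classical all_reals all_analysis.
From mathcomp Require Import ring lra.
Set Implicit Arguments. Unset Strict Implicit. Unset Printing Implicit Defensive.
Import Order.TTheory GRing.Theory Num.Theory.
Local Open Scope ring_scope.

(* When row a = s_t arrives and
   <a,x> >= 1 nothing changes.  Otherwise, with O the optimum of the rows seen so far,
   every x_j is first raised to the floor O / (n c_j); then all coordinates are
   repeatedly multiplied by 1 + rate_j, rate_j = (a_j/c_j) / (2 sum_i a_i/c_i),
   until <a,x> >= 2 (mw_step, num_steps).

   One step costs <a,x> / (2 sum_i a_i/c_i).  For the dyadic cost levels
   L_k = OPT / 2^k we fix targets W_k = 4 z_k, z_k a cheap solution of the longest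
   prefix with optimum <= L_k, and charge the steps to the potential
     Phi(x) = sum_k sum_j c_j W_kj max(0, ln W_kj - ln max(x_j, floor of L_(k+1))).
   A step on a row in band k lowers Phi by a third of its cost (phi_step,
   total_pot_run); Phi <= 16 OPT ln (16 n) throughout; raising floors costs at most
   OPT in total (cost_invariant).  Hence cost <= OPT (1 + 48 ln (16 n)) (cost_bound).

   An update takes <a,x> from below 1 to at least 2, so it doubles some
   coordinate and adds ln 2 to sum_j ln x_j; after the first round every x_j lies
   between alpha_1 / (n c_j) and cost / c_j.  Hence the number of updates is at most
   1 + 2 n ln (n cost / alpha_1) (count_bound). *)

Definition nonneg {R : realType} {n} (v : 'I_n -> R) := forall j, 0 <= v j.
Definition vle {R : realType} {n} (x y : 'I_n -> R) := forall j, x j <= y j.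

Section VectorFacts.
Variables (R : realType) (n : nat).
Implicit Types (a x y : 'I_n -> R).

Lemma dotv_le a x y : nonneg a -> vle x y -> dotv a x <= dotv a y.
Proof. by move=> a_ge0 xy; apply: ler_sum => j _; apply: ler_wpM2l. Qed.

Lemma dotv_ge0 a x : nonneg a -> nonneg x -> 0 <= dotv a x.
Proof. by move=> a_ge0 x_ge0; apply: sumr_ge0 => j _; apply: mulr_ge0. Qed.

Lemma dotv_term_le a x j : nonneg a -> nonneg x -> a j * x j <= dotv a x.
Proof.
move=> a_ge0 x_ge0; rewrite /dotv (bigD1 j) //= lerDl.
by apply: sumr_ge0 => i _; apply: mulr_ge0.
Qed.

Lemma dotv_scale a x (r : R) : dotv a (fun j => r * x j) = r * dotv a x.
Proof. by rewrite /dotv mulr_sumr; apply: eq_bigr => j _; rewrite mulrCA. Qed.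

Lemma dotv0 a : dotv a (fun=> 0) = 0.
Proof. by rewrite /dotv big1 // => j _; rewrite mulr0. Qed.

End VectorFacts.

Section MultiplicativeStep.
Variables (R : realType) (n : nat) (c a : 'I_n -> R).
Hypotheses (c_gt0 : forall j, 0 < c j) (a_ge0 : nonneg a).

Definition ratio_sum : R := \sum_(j < n) a j / c j.
Definition rate (j : 'I_n) : R := (a j / c j) / (2 * ratio_sum).
Definition mw_step (x : 'I_n -> R) : 'I_n -> R := fun j => x j * (1 + rate j).

Lemma ratio_ge0 j : 0 <= a j / c j.
Proof. by rewrite divr_ge0 // ltW. Qed.

Lemma ratio_le_sum j : a j / c j <= ratio_sum.
Proof.
by rewrite /ratio_sum (bigD1 j) //= lerDl; apply: sumr_ge0 => i _; apply: ratio_ge0.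
Qed.

Lemma rate_ge0 j : 0 <= rate j.
Proof.
by rewrite divr_ge0 ?ratio_ge0 // mulr_ge0 // (le_trans (ratio_ge0 j) (ratio_le_sum j)).
Qed.

Lemma rate_gt0 j : 0 < a j -> 0 < rate j.
Proof.
move=> aj_gt0; have ratio_gt0 : 0 < a j / c j by rewrite divr_gt0.
by rewrite divr_gt0 // mulr_gt0 // (lt_le_trans ratio_gt0 (ratio_le_sum j)).
Qed.

Lemma rate_le_half j : rate j <= 2^-1.
Proof.
have [sum0|sum_neq0] := eqVneq ratio_sum 0; first by rewrite /rate sum0 mulr0 invr0 mulr0.
have sum_gt0 : 0 < ratio_sum.
  by rewrite lt_neqAle eq_sym sum_neq0 (le_trans (ratio_ge0 j) (ratio_le_sum j)).
by rewrite /rate ler_pdivrMr ?mulr_gt0 // mulrA mulVf ?mul1r ?ratio_le_sum.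
Qed.

(* rate j is chosen so that c_j x_j rate_j = a_j x_j / (2 ratio_sum): one step
   costs a fixed fraction of the current coverage <a, x>. *)
Lemma mw_step_cost x :
  dotv c (mw_step x) = dotv c x + (2 * ratio_sum)^-1 * dotv a x.
Proof.
rewrite /dotv /mw_step mulr_sumr -big_split /=; apply: eq_bigr => j _.
have cj_neq0 : c j != 0 by rewrite gt_eqF.
have [sum0|sum_neq0] := eqVneq ratio_sum 0.
  by rewrite /rate sum0 !(mulr0, invr0, mul0r, addr0, mulr1).
by rewrite /rate; field; rewrite sum_neq0 cj_neq0.
Qed.

Lemma mw_step_ge x : nonneg x -> vle x (mw_step x).
Proof.
move=> x_ge0 j; rewrite /mw_step -{1}[x j]mulr1.
by apply: ler_wpM2l => //; rewrite lerDl rate_ge0.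
Qed.

Lemma iter_step_ge k x : nonneg x -> vle x (iter k mw_step x).
Proof.
move=> x_ge0; elim: k => [|k IH] j //=.
apply: le_trans (IH j) _; apply: mw_step_ge => i.
exact: le_trans (x_ge0 i) (IH i).
Qed.

Lemma mw_step_gain x j : nonneg x ->
  dotv a x + a j * x j * rate j <= dotv a (mw_step x).
Proof.
move=> x_ge0.
have -> : dotv a (mw_step x) = dotv a x + \sum_(i < n) a i * x i * rate i.
  by rewrite /dotv -big_split; apply: eq_bigr => i _; rewrite /mw_step !mulrDr mulr1 mulrA.
rewrite lerD2l (bigD1 j) //= lerDl; apply: sumr_ge0 => i _.
by apply: mulr_ge0; [exact: mulr_ge0 | exact: rate_ge0].
Qed.

(* Starting from y with a_j y_j > 0, the coverage grows at least linearly, hence it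
   eventually reaches 2. *)
Lemma iter_step_reaches_two y j : nonneg y -> 0 < a j -> 0 < y j ->
  exists k, 2 <= dotv a (iter k mw_step y).
Proof.
move=> y_ge0 aj_gt0 yj_gt0.
set d := a j * y j * rate j.
have d_gt0 : 0 < d by apply: mulr_gt0; [exact: mulr_gt0 | exact: rate_gt0].
have linear k : k%:R * d <= dotv a (iter k mw_step y).
  elim: k => [|k IH]; first by rewrite mul0r dotv_ge0.
  have z_ge0 : nonneg (iter k mw_step y).
    by move=> i; exact: le_trans (y_ge0 i) (iter_step_ge k y_ge0 i).
  apply: le_trans (mw_step_gain j z_ge0); rewrite -nat1r mulrDl mul1r addrC.
  apply: lerD => //; apply: ler_wpM2r; first exact: rate_ge0.
  by apply: ler_wpM2l; [exact: ltW | exact: iter_step_ge].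
exists (Num.truncn (2 / d)).+1; apply: le_trans (linear _).
by rewrite -ler_pdivrMr // ltW // truncnS_gt.
Qed.

Definition num_steps (y : 'I_n -> R) : nat :=
  if pselect (exists k, 2 <= dotv a (iter k mw_step y)) is left h then ex_minn h else 0.

Lemma num_steps_spec y j : nonneg y -> 0 < a j -> 0 < y j ->
  2 <= dotv a (iter (num_steps y) mw_step y) /\
  (forall i, (i < num_steps y)%N -> dotv a (iter i mw_step y) < 2).
Proof.
move=> y_ge0 aj_gt0 yj_gt0; rewrite /num_steps.
case: pselect => [h|]; last by move/(_ (iter_step_reaches_two y_ge0 aj_gt0 yj_gt0)).
case: (ex_minnP h) => N reachN minN; split => // i ltiN.
by rewrite ltNge; apply/negP => /minN; rewrite leqNgt ltiN.
Qed.

End MultiplicativeStep.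

Section LogPotential.
Variable R : realType.
Implicit Types (w m x e B : R).

Lemma ln_le x y : 0 < x -> x <= y -> ln x <= ln y.
Proof. by move=> x_gt0 xy; rewrite ler_ln // posrE (lt_le_trans x_gt0). Qed.

Lemma ln1D_ge e : 0 <= e -> e / (1 + e) <= ln (1 + e).
Proof.
move=> e_ge0; have e1_gt0 : 0 < 1 + e by lra.
have gt_m1 : -1 < - (e / (1 + e)) by rewrite ltrNr opprK ltr_pdivrMr // mul1r; lra.
have := le_ln1Dx gt_m1.
have -> : 1 - e / (1 + e) = (1 + e)^-1 by field; rewrite gt_eqF.
by rewrite lnV ?posrE //; lra.
Qed.

Definition phi w m x : R := w * Num.max 0 (ln w - ln (Num.max x m)).

Lemma phi_ge0 w m x : 0 <= w -> 0 <= phi w m x.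
Proof. by move=> w_ge0; rewrite /phi mulr_ge0 // le_max lexx. Qed.

Lemma phi_antitone w m x x' : 0 <= w -> 0 < m -> x <= x' -> phi w m x' <= phi w m x.
Proof.
move=> w_ge0 m_gt0 xx'; rewrite /phi ler_wpM2l //.
have ln_max : ln (Num.max x m) <= ln (Num.max x' m).
  by apply: ln_le; rewrite ?lt_max ?m_gt0 ?orbT // ge_max !le_max xx' lexx orbT.
by rewrite ge_max le_max lexx /= le_max; apply/orP; right; lra.
Qed.

Lemma phi_drop_below w m x e : 0 < m -> m <= x -> 0 <= e -> x * (1 + e) <= w ->
  phi w m x - phi w m (x * (1 + e)) = w * ln (1 + e).
Proof.
move=> m_gt0 mx e_ge0 xe_le.
have x_gt0 : 0 < x := lt_le_trans m_gt0 mx.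
have x_le : x <= x * (1 + e) by apply: ler_peMr; [exact: ltW | rewrite lerDl].
have xe_gt0 : 0 < x * (1 + e) := lt_le_trans x_gt0 x_le.
have ln_xe : ln (x * (1 + e)) = ln x + ln (1 + e) by rewrite lnM ?posrE //; lra.
have ln_w : ln (x * (1 + e)) <= ln w by exact: ln_le.
have ln_e_ge0 : 0 <= ln (1 + e) by rewrite ln_ge0 //; lra.
rewrite /phi (max_idPl mx) (max_idPl (le_trans mx x_le)).
have d1 : 0 <= ln w - ln x by rewrite ln_xe in ln_w; lra.
have d2 : 0 <= ln w - ln (x * (1 + e)) by lra.
by rewrite (max_idPr d1) (max_idPr d2) ln_xe; ring.
Qed.

Lemma phi_step (c a w m x th e : R) :
  0 < c -> 0 <= a -> 0 <= w -> 0 < m -> m <= x -> 0 <= th ->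
  c * e = th * a -> 0 <= e -> e <= 2^-1 ->
  (2/3) * th * (a * w - 3/2 * (a * x)) <= c * (phi w m x - phi w m (x * (1 + e))).
Proof.
move=> c_gt0 a_ge0 w_ge0 m_gt0 mx th_ge0 ce e_ge0 e_le.
have x_gt0 : 0 < x := lt_le_trans m_gt0 mx.
have [xe_le|w_lt] := leP (x * (1 + e)) w.
- rewrite phi_drop_below //.
  have e_small : (2/3) * e <= e / (1 + e) by rewrite ler_pdivlMr; [nra | lra].
  have lhs_le : (2/3) * th * (a * w - 3/2 * (a * x)) <= (c * w) * ((2/3) * e).
    have -> : c * w * (2/3 * e) = 2/3 * w * (th * a) by rewrite -ce; ring.
    have : 0 <= th * (a * x) by apply: mulr_ge0 => //; apply: mulr_ge0 => //; exact: ltW.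
    nra.
  apply: (le_trans lhs_le); rewrite [c * (w * _)]mulrA.
  apply: ler_wpM2l; first by rewrite mulr_ge0 // ltW.
  exact: (le_trans e_small (ln1D_ge e_ge0)).
- have drop_ge0 : 0 <= c * (phi w m x - phi w m (x * (1 + e))).
    apply: mulr_ge0; first exact: ltW.
    by rewrite subr_ge0 phi_antitone //; apply: ler_peMr; [exact: ltW | rewrite lerDl].
  apply: (le_trans _ drop_ge0); apply: mulr_ge0_le0; first by apply: mulr_ge0; lra.
  have : a * w <= a * (x * (1 + e)) by apply: ler_wpM2l => //; exact: ltW.
  have : a * (x * (1 + e)) <= a * (x * (3/2)).
    by apply: ler_wpM2l => //; apply: ler_wpM2l; [exact: ltW | lra].
  lra.
Qed.

Lemma phi_le_ln w m x B : 0 <= w -> 0 < m -> w <= B * m -> 1 <= B -> phi w m x <= w * ln B.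
Proof.
move=> w_ge0 m_gt0 wB B_ge1; rewrite /phi.
have [->|w_neq0] := eqVneq w 0; first by rewrite !mul0r.
have w_gt0 : 0 < w by rewrite lt_neqAle eq_sym w_neq0.
rewrite ler_wpM2l // ge_max ln_ge0 //=.
have := ln_le w_gt0 wB; rewrite lnM ?posrE //; last lra.
have : ln m <= ln (Num.max x m) by apply: ln_le; rewrite // le_max lexx orbT.
lra.
Qed.

End LogPotential.

Section LevelPotential.
Variables (R : realType) (n : nat) (c a : 'I_n -> R).
Hypotheses (c_gt0 : forall j, 0 < c j) (a_ge0 : nonneg a).

Definition admissible (W M : 'I_n -> R) := nonneg W /\ (forall j, 0 < M j).

Definition level_pot (W M x : 'I_n -> R) : R := \sum_(j < n) c j * phi (W j) (M j) (x j).

Definition total_pot (K : nat) (WW MM : nat -> 'I_n -> R) (x : 'I_n -> R) : R :=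
  \sum_(l < K) level_pot (WW l) (MM l) x.

Lemma level_pot_ge0 W M x : admissible W M -> 0 <= level_pot W M x.
Proof.
move=> [W_ge0 _]; apply: sumr_ge0 => j _.
by apply: mulr_ge0; [exact: ltW | exact: phi_ge0].
Qed.

Lemma level_pot_antitone W M x x' : admissible W M -> vle x x' ->
  level_pot W M x' <= level_pot W M x.
Proof.
move=> [W_ge0 M_gt0] xx'; apply: ler_sum => j _.
by apply: ler_wpM2l; [exact: ltW | exact: phi_antitone].
Qed.

Lemma level_pot_le_ln W M x B : admissible W M -> (forall j, W j <= B * M j) -> 1 <= B ->
  level_pot W M x <= dotv c W * ln B.
Proof.
move=> [W_ge0 M_gt0] WB B_ge1; rewrite /level_pot /dotv mulr_suml.
apply: ler_sum => j _; rewrite -mulrA.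
by apply: ler_wpM2l; [exact: ltW | exact: phi_le_ln].
Qed.

Section LevelFamily.
Variables (K : nat) (WW MM : nat -> 'I_n -> R).
Hypothesis WM_adm : forall l, admissible (WW l) (MM l).

Lemma total_pot_ge0 x : 0 <= total_pot K WW MM x.
Proof. by apply: sumr_ge0 => l _; apply: level_pot_ge0. Qed.

Lemma total_pot_antitone x x' : vle x x' -> total_pot K WW MM x' <= total_pot K WW MM x.
Proof. by move=> xx'; apply: ler_sum => l _; apply: level_pot_antitone. Qed.

Lemma level_pot_step l x : vle (MM l) x -> 4 <= dotv a (WW l) -> dotv a x < 2 ->
  dotv c (mw_step c a x) - dotv c x <=
  3 * (level_pot (WW l) (MM l) x - level_pot (WW l) (MM l) (mw_step c a x)).
Proof.
move=> Mx aW_ge4 ax_lt2; have [W_ge0 M_gt0] := WM_adm l.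
rewrite mw_step_cost // addrC addKr.
set th := (2 * ratio_sum c a)^-1.
have th_ge0 : 0 <= th.
  by rewrite invr_ge0 mulr_ge0 //; apply: sumr_ge0 => j _; apply: ratio_ge0.
have drop : (2/3) * th * (dotv a (WW l) - 3/2 * dotv a x) <=
    level_pot (WW l) (MM l) x - level_pot (WW l) (MM l) (mw_step c a x).
  have -> : (2/3) * th * (dotv a (WW l) - 3/2 * dotv a x) =
      \sum_(j < n) (2/3) * th * (a j * WW l j - 3/2 * (a j * x j)).
    by rewrite /dotv -mulr_sumr sumrB -mulr_sumr.
  rewrite /level_pot -sumrB; apply: ler_sum => j _; rewrite -mulrBr.
  apply: phi_step; rewrite ?rate_ge0 ?rate_le_half //.
    by have := c_gt0 j; rewrite lt0r => /andP[cj_neq0 _]; rewrite /rate -/th; field.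
have : th * dotv a x <= 2 * (th * (dotv a (WW l) - 3/2 * dotv a x)).
  by rewrite mulrCA; apply: ler_wpM2l => //; lra.
lra.
Qed.

Lemma total_pot_step l x : (l < K)%N -> vle (MM l) x -> 4 <= dotv a (WW l) ->
  dotv a x < 2 ->
  dotv c (mw_step c a x) - dotv c x <=
  3 * (total_pot K WW MM x - total_pot K WW MM (mw_step c a x)).
Proof.
move=> ltlK Mx aW_ge4 ax_lt2.
apply: (le_trans (level_pot_step Mx aW_ge4 ax_lt2)); apply: ler_wpM2l => //.
have -> : total_pot K WW MM x - total_pot K WW MM (mw_step c a x) =
    \sum_(k < K) (level_pot (WW k) (MM k) x - level_pot (WW k) (MM k) (mw_step c a x)).
  by rewrite /total_pot sumrB.
rewrite (bigD1 (Ordinal ltlK)) //= lerDl.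
apply: sumr_ge0 => k _; rewrite subr_ge0; apply: level_pot_antitone => //.
apply: mw_step_ge => // j; exact: le_trans (ltW ((WM_adm l).2 j)) (Mx j).
Qed.

Lemma total_pot_run l y N : (l < K)%N -> vle (MM l) y -> 4 <= dotv a (WW l) ->
  (forall i, (i < N)%N -> dotv a (iter i (mw_step c a) y) < 2) ->
  dotv c (iter N (mw_step c a) y) - dotv c y <=
  3 * (total_pot K WW MM y - total_pot K WW MM (iter N (mw_step c a) y)).
Proof.
move=> ltlK My aW_ge4; elim: N => [|N IH] below2 /=; first by rewrite !subrr mulr0.
have y_ge0 : nonneg y by move=> j; exact: le_trans (ltW ((WM_adm l).2 j)) (My j).
have My' : vle (MM l) (iter N (mw_step c a) y).
  by move=> j; exact: le_trans (My j) (iter_step_ge c_gt0 a_ge0 N y_ge0 j).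
have := total_pot_step ltlK My' aW_ge4 (below2 N (ltnSn N)).
have := IH (fun i lt_iN => below2 i (ltnW lt_iN)).
lra.
Qed.

End LevelFamily.
End LevelPotential.

(* The i-th constraint row (the zero row beyond the end). *)
Local Notation rowi s i := (nth (fun=> 0) s i).

Local Open Scope classical_set_scope.

Section LPFacts.
Variables (R : realType) (n : nat) (c : 'I_n -> R).
Implicit Types (s : seq ('I_n -> R)) (a x : 'I_n -> R).

Lemma feasible_take s x t : feasible s x -> feasible (take t s) x.
Proof.
move=> [x_ge0 covers]; split => // i; rewrite size_take_min leq_min => /andP[lt_it lt_is].
by rewrite nth_take //; apply: covers.
Qed.

Lemma OPT_ge s L : (exists x, feasible s x) ->
  (forall x, feasible s x -> L <= dotv c x) -> L <= OPT c s.
Proof.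
move=> [x feas_x] lb; apply: lb_le_inf; first by exists (dotv c x); exists x.
by move=> _ [y feas_y <-]; apply: lb.
Qed.

Lemma OPT_approx s L : (exists x, feasible s x) -> OPT c s < L ->
  exists2 x, feasible s x & dotv c x < L.
Proof.
move=> [x feas_x] /(inf_lt (ex_intro _ (dotv c x) (ex_intro2 _ _ x feas_x erefl))).
by move=> [_ [y feas_y <-] lt_yL]; exists y.
Qed.

(* With positive costs the feasible costs are bounded below by 0, so OPT is below each. *)
Hypothesis c_gt0 : forall j, 0 < c j.

Lemma OPT_le s x : feasible s x -> OPT c s <= dotv c x.
Proof.
move=> feas_x; apply: ge_inf; last by exists x.
by exists 0 => _ [y [y_ge0 _] <-]; apply: dotv_ge0 => // j; exact: ltW.
Qed.

Lemma OPT_take_le s t t' : (exists x, feasible s x) -> (t <= t')%N ->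
  OPT c (take t s) <= OPT c (take t' s).
Proof.
move=> [x feas_x] le_tt'; apply: OPT_ge; first by exists x; exact: feasible_take.
by move=> y feas_y; apply: OPT_le; rewrite -(take_takel s le_tt'); exact: feasible_take.
Qed.

Lemma alpha1_ge a j : nonneg a -> 0 < a j -> (ratio_sum c a)^-1 <= alpha1 c a.
Proof.
move=> a_ge0 aj_gt0; apply: lb_le_inf; first by exists (c j / a j); exists j.
move=> _ [i ai_gt0 <-]; have ratio_gt0 : 0 < a i / c i by rewrite divr_gt0.
have ratio_le := ratio_le_sum c_gt0 a_ge0 i.
by rewrite -(invf_div (a i)) lef_pV2 ?posrE // (lt_le_trans ratio_gt0).
Qed.

Lemma alpha1_gt0 a j : nonneg a -> 0 < a j -> 0 < alpha1 c a.
Proof.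
move=> a_ge0 aj_gt0; apply: lt_le_trans (alpha1_ge a_ge0 aj_gt0).
by rewrite invr_gt0 (lt_le_trans _ (ratio_le_sum c_gt0 a_ge0 j)) // divr_gt0.
Qed.

Lemma alpha1_mul_le a j : nonneg a -> alpha1 c a * a j <= c j.
Proof.
move=> a_ge0; have [aj_gt0|aj_le0] := ltP 0 (a j); last first.
  have -> : a j = 0 by apply/eqP; rewrite eq_le aj_le0 a_ge0.
  by rewrite mulr0; exact: ltW.
rewrite -ler_pdivlMr //; apply: ge_inf; last by exists j.
by exists 0 => _ [i ai_gt0 <-]; apply: divr_ge0; exact: ltW.
Qed.

End LPFacts.

Section ValidInstance.
Variables (R : realType) (n : nat) (c : 'I_n -> R) (s : seq ('I_n -> R)).
Hypothesis valid : valid_instance c s.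

Lemma valid_c_gt0 j : 0 < c j.
Proof. exact: valid.1. Qed.

Lemma valid_row_ge0 i : nonneg (rowi s i).
Proof.
move=> j; case: (ltnP i (size s)) => lt_is; first exact: (valid.2 i lt_is).1.
by rewrite nth_default.
Qed.

Lemma valid_row_pos i : (i < size s)%N -> exists j, 0 < rowi s i j.
Proof. by move=> lt_is; exact: (valid.2 i lt_is).2. Qed.

(* The uniform vector sum_i 1/|s_i|_1 satisfies every row. *)
Lemma valid_feasible : exists x, feasible s x.
Proof.
pose rs i := \sum_(j < n) rowi s i j.
have rs_gt0 i : (i < size s)%N -> 0 < rs i.
  move=> lt_is; have [j aij_gt0] := valid_row_pos lt_is.
  apply: lt_le_trans aij_gt0 _; rewrite /rs (bigD1 j) //= lerDl.
  by apply: sumr_ge0 => k _; exact: valid_row_ge0.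
pose lam := \sum_(i < size s) (rs i)^-1.
have inv_le_lam i : (i < size s)%N -> (rs i)^-1 <= lam.
  move=> lt_is; rewrite /lam (bigD1 (Ordinal lt_is)) //= lerDl.
  by apply: sumr_ge0 => k _; rewrite invr_ge0 ltW // rs_gt0.
exists (fun=> lam); split => [j|i lt_is].
  by apply: sumr_ge0 => i _; rewrite invr_ge0 ltW // rs_gt0.
have -> : dotv (rowi s i) (fun=> lam) = lam * rs i.
  by rewrite /dotv /rs mulr_sumr; apply: eq_bigr => j _; rewrite mulrC.
rewrite -(mulVf (lt0r_neq0 (rs_gt0 i lt_is))).
by apply: ler_wpM2r; [exact: ltW (rs_gt0 i lt_is) | exact: inv_le_lam].
Qed.

Lemma valid_n_gt0 : (0 < size s)%N -> 0 < n%:R :> R.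
Proof.
move=> s_gt0; have [j _] := valid_row_pos s_gt0.
by rewrite ltr0n (leq_ltn_trans _ (ltn_ord j)).
Qed.

Lemma alpha1_head_gt0 : (0 < size s)%N -> 0 < alpha1 c (head (fun=> 0) s).
Proof.
move=> s_gt0; have [j aj_gt0] := valid_row_pos s_gt0.
by rewrite -nth0; exact: (alpha1_gt0 valid_c_gt0 (valid_row_ge0 0) aj_gt0).
Qed.

(* Every nonempty prefix contains the first row, so its optimum is at least alpha1. *)
Lemma alpha1_le_OPT t : (0 < t)%N -> (0 < size s)%N ->
  alpha1 c (head (fun=> 0) s) <= OPT c (take t s).
Proof.
move=> t_gt0 s_gt0; rewrite -nth0.
have a_ge0 := valid_row_ge0 0.
have [x feas_x] := valid_feasible.
apply: OPT_ge => [|y [y_ge0 covers]]; first by exists x; exact: feasible_take.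
have cover0 : 1 <= dotv (rowi s 0) y.
  by have := covers 0%N; rewrite nth_take // size_take_min leq_min t_gt0 s_gt0; apply.
have [j0 aj0_gt0] := valid_row_pos s_gt0.
have al_gt0 := alpha1_gt0 valid_c_gt0 a_ge0 aj0_gt0.
apply: (le_trans (y := alpha1 c (rowi s 0) * dotv (rowi s 0) y)).
  by rewrite -{1}[alpha1 _ _]mulr1; apply: ler_wpM2l => //; exact: ltW.
rewrite /dotv mulr_sumr; apply: ler_sum => j _; rewrite mulrA.
by apply: ler_wpM2r; [exact: y_ge0 | exact: alpha1_mul_le valid_c_gt0 _ _ a_ge0].
Qed.

End ValidInstance.

Local Close Scope classical_set_scope.

Section Algorithm.
Variables (R : realType) (n : nat) (c : 'I_n -> R).

Definition raise_floor (O : R) (x : 'I_n -> R) : 'I_n -> R :=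
  fun j => Num.max (x j) (O / (n%:R * c j)).

Definition update (P : seq ('I_n -> R)) (a x : 'I_n -> R) : 'I_n -> R :=
  if 1 <= dotv a x then x else
  let y := raise_floor (OPT c P) x in iter (num_steps c a y) (mw_step c a) y.

Fixpoint sol (s : seq ('I_n -> R)) (t : nat) : 'I_n -> R :=
  if t is t'.+1 then update (take t s) (rowi s t') (sol s t') else fun=> 0.

Lemma sol_take s t t' : (t <= t')%N -> sol (take t' s) t = sol s t.
Proof.
elim: t => [//|t IH] le_tt' /=.
by rewrite take_takel // nth_take // IH // ltnW.
Qed.

End Algorithm.

Definition covering_alg (R : realType) : online_alg R := fun n c s => sol c s (size s).

Lemma covering_alg_take (R : realType) n (c : 'I_n -> R) s t :
  (t <= size s)%N -> covering_alg c (take t s) = sol c s t.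
Proof. by move=> le_ts; rewrite /covering_alg size_takel // sol_take. Qed.

Section Invariants.
Variables (R : realType) (n : nat) (c : 'I_n -> R) (s : seq ('I_n -> R)).
Hypothesis valid : valid_instance c s.
Let c_gt0 := valid_c_gt0 valid.

Lemma raise_floor_ge O x : vle x (raise_floor c O x).
Proof. by move=> j; rewrite /raise_floor le_max lexx. Qed.

Lemma update_ge P a x : nonneg a -> nonneg x -> vle x (update c P a x).
Proof.
move=> a_ge0 x_ge0 j; rewrite /update; case: ifP => //= _.
apply: le_trans (raise_floor_ge (OPT c P) x j) _; apply: iter_step_ge => // i.
exact: le_trans (x_ge0 i) (raise_floor_ge _ _ i).
Qed.

Lemma sol_grows t : nonneg (sol c s t) /\ vle (sol c s t) (sol c s t.+1).
Proof.
elim: t => [|t [x_ge0 x_le]].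
  have zero_ge0 : nonneg (sol c s 0) by move=> j.
  by split => //; apply: update_ge => //; exact: (valid_row_ge0 valid _).
have x'_ge0 : nonneg (sol c s t.+1) by move=> j; exact: le_trans (x_ge0 j) (x_le j).
by split => //; apply: update_ge => //; exact: (valid_row_ge0 valid _).
Qed.

Lemma sol_ge0 t : nonneg (sol c s t).
Proof. exact: (sol_grows t).1. Qed.

Lemma sol_mono t t' : (t <= t')%N -> vle (sol c s t) (sol c s t').
Proof.
elim: t' => [|t' IH]; first by rewrite leqn0 => /eqP -> j.
rewrite leq_eqVlt => /orP[/eqP -> //|]; rewrite ltnS => le_tt' j.
exact: le_trans (IH le_tt' j) ((sol_grows t').2 j).
Qed.

Lemma sol_covered_round t : 1 <= dotv (rowi s t) (sol c s t) -> sol c s t.+1 = sol c s t.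
Proof. by move=> covered; rewrite /= /update covered. Qed.

(* Prefix optima are positive, being at least alpha1 > 0. *)
Lemma OPT_prefix_gt0 t : (0 < t)%N -> (0 < size s)%N -> 0 < OPT c (take t s).
Proof.
move=> t_gt0 s_gt0; apply: lt_le_trans (alpha1_le_OPT valid t_gt0 s_gt0).
exact: alpha1_head_gt0.
Qed.

Lemma sol_violated_round t : (t < size s)%N -> ~~ (1 <= dotv (rowi s t) (sol c s t)) ->
  let O := OPT c (take t.+1 s) in
  let y := raise_floor c O (sol c s t) in
  let N := num_steps c (rowi s t) y in
  [/\ sol c s t.+1 = iter N (mw_step c (rowi s t)) y,
      2 <= dotv (rowi s t) (sol c s t.+1),
      (forall i, (i < N)%N -> dotv (rowi s t) (iter i (mw_step c (rowi s t)) y) < 2),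
      0 < O & forall j, O / (n%:R * c j) <= y j].
Proof.
move=> lt_ts violated O y N.
have O_gt0 : 0 < O by apply: OPT_prefix_gt0 => //; exact: leq_ltn_trans lt_ts.
have [j0 aj0_gt0] := valid_row_pos valid lt_ts.
have n_gt0 := valid_n_gt0 valid (leq_ltn_trans (leq0n t) lt_ts).
have floor_le j : O / (n%:R * c j) <= y j by rewrite /y /raise_floor le_max lexx orbT.
have y_gt0 j : 0 < y j by apply: lt_le_trans (floor_le j); rewrite divr_gt0 ?mulr_gt0.
have solE : sol c s t.+1 = iter N (mw_step c (rowi s t)) y by rewrite /= /update (negbTE violated).
have [reach below] :=
  num_steps_spec c_gt0 (valid_row_ge0 valid t) (fun j => ltW (y_gt0 j)) aj0_gt0 (y_gt0 j0).
by split; rewrite // solE.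
Qed.

Lemma sol_covers_row t : (t < size s)%N -> 1 <= dotv (rowi s t) (sol c s t.+1).
Proof.
move=> lt_ts; have [covered|violated] := boolP (1 <= dotv (rowi s t) (sol c s t)).
  by rewrite sol_covered_round.
by have [_ covers2 _ _ _] := sol_violated_round lt_ts violated; apply: le_trans covers2; lra.
Qed.

Lemma sol_feasible t : (t <= size s)%N -> feasible (take t s) (sol c s t).
Proof.
move=> le_ts; split => [|i]; first exact: sol_ge0.
rewrite size_takel // => lt_it; rewrite nth_take //.
apply: le_trans (sol_covers_row (leq_trans lt_it le_ts)) _.
by apply: dotv_le; [exact: (valid_row_ge0 valid _) | exact: sol_mono lt_it].
Qed.

End Invariants.

Section Dyadic.
Variable R : realType.

Lemma geom_sum_le K : \sum_(k < K) ((2:R) ^+ k)^-1 <= 2.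
Proof.
suff geomE : \sum_(k < K) ((2:R) ^+ k)^-1 + 2 * ((2:R) ^+ K)^-1 = 2.
  by rewrite -[X in _ <= X]geomE lerDl mulr_ge0 // invr_ge0 exprn_ge0.
elim: K => [|K IH]; first by rewrite big_ord0 expr0 invr1 add0r mulr1.
rewrite big_ord_recr /= -addrA -[X in _ = X]IH; congr (_ + _).
by rewrite exprS invfM; field; rewrite expf_neq0.
Qed.

Lemma dyadic_below (O a : R) : 0 < a -> exists K, O / 2 ^+ K < a.
Proof.
move=> a_gt0; exists (Num.truncn (O / a)).+1; set K := (Num.truncn (O / a)).+1.
have K_le : (K%:R : R) <= 2 ^+ K by rewrite -natrX ler_nat ltnW // ltn_expl.
rewrite ltr_pdivrMr ?exprn_gt0 // mulrC -ltr_pdivrMr //.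
exact: lt_le_trans (truncnS_gt _) K_le.
Qed.

Lemma dyadic_band (O0 a O : R) K : 0 < a -> a <= O -> O <= O0 -> O0 / 2 ^+ K < a ->
  exists k, [/\ (k < K)%N, O0 / 2 ^+ k.+1 < O & O <= O0 / 2 ^+ k].
Proof.
move=> a_gt0 aO OO0 O0K.
have K_gt0 : (0 < K)%N by case: K O0K => [|K] //; rewrite expr0 divr1; lra.
have exP : exists k, O0 / 2 ^+ k.+1 < O by exists K.-1; rewrite prednK //; lra.
case: (ex_minnP exP) => k below_k min_k; exists k; split => //.
- rewrite ltnNge; apply/negP => le_Kk.
  have le_kK : (k <= K.-1)%N by apply: min_k; rewrite prednK //; exact: lt_le_trans O0K aO.
  by have := leq_trans le_Kk le_kK; rewrite leqNgt ltn_predL K_gt0.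
- case: k below_k min_k => [|k] _ min_k; first by rewrite expr0 divr1.
  by rewrite leNgt; apply/negP => /min_k; rewrite ltnn.
Qed.

End Dyadic.

Section CostAnalysis.
Variables (R : realType) (n : nat) (c : 'I_n -> R) (s : seq ('I_n -> R)).
Hypotheses (valid : valid_instance c s) (s_gt0 : (0 < size s)%N).
Let c_gt0 := valid_c_gt0 valid.
Let n_gt0 := valid_n_gt0 valid s_gt0.
Let Os := OPT c s.

Lemma OPT_prefix_le t : (t <= size s)%N -> OPT c (take t s) <= Os.
Proof.
move=> le_ts; rewrite /Os -{2}(take_size s).
exact: OPT_take_le c_gt0 _ _ _ (valid_feasible valid) le_ts.
Qed.

Lemma OPT_gt0 : 0 < Os.
Proof. by rewrite /Os -(take_size s) OPT_prefix_gt0. Qed.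

(* Target of a cost level L: 4 z for a solution z of cost < 2L of the longest prefix
   with optimum <= L. *)
Lemma level_target L : 0 < L -> exists W : 'I_n -> R, [/\ nonneg W, dotv c W <= 8 * L &
  forall t, (t < size s)%N -> OPT c (take t.+1 s) <= L -> 4 <= dotv (rowi s t) W].
Proof.
move=> L_gt0.
have [[t0 [lt_t0s t0L]]|none] :=
  pselect (exists t, (t < size s)%N /\ OPT c (take t.+1 s) <= L); last first.
  exists (fun=> 0); split => [j||t lt_ts tL] //; first by rewrite dotv0; lra.
  by case: none; exists t.
pose P t := (t <= size s)%N && (OPT c (take t s) <= L).
have exP : exists t, P t by exists t0.+1; rewrite /P lt_t0s t0L.
have ub t : P t -> (t <= size s)%N by case/andP.
have [T /andP[le_Ts TL] max_T] := ex_maxnP exP ub.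
have [x feas_x] := valid_feasible valid.
have [z [z_ge0 z_covers] cost_z] :
    exists2 z, feasible (take T s) z & dotv c z < 2 * L.
  by apply: OPT_approx; [exists x; exact: feasible_take | lra].
exists (fun j => 4 * z j); split => [j||t lt_ts tL]; rewrite ?dotv_scale.
- by rewrite mulr_ge0.
- lra.
- have le_tT : (t.+1 <= T)%N by apply: max_T; rewrite /P lt_ts tL.
  by have := z_covers t; rewrite size_takel // nth_take // => /(_ le_tT); lra.
Qed.

Lemma raise_floor_cost O x ph : (forall j, ph / (n%:R * c j) <= x j) ->
  dotv c (raise_floor c O x) - dotv c x <= Num.max ph O - ph.
Proof.
move=> x_above.
have -> : Num.max ph O - ph = \sum_(j < n) (Num.max ph O - ph) / n%:R.
  by rewrite sumr_const card_ord -mulr_natr; field; exact: lt0r_neq0.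
rewrite /dotv -sumrB; apply: ler_sum => j _; rewrite /raise_floor -mulrBr.
have cj_neq0 : c j != 0 := lt0r_neq0 (c_gt0 j).
have n_neq0 : n%:R != 0 :> R := lt0r_neq0 n_gt0.
have [x_ge|x_lt] := leP (O / (n%:R * c j)) (x j).
  by rewrite subrr mulr0 divr_ge0 // subr_ge0 le_max lexx.
have floorE : c j * (O / (n%:R * c j)) = O / n%:R by field; rewrite cj_neq0 n_neq0.
have ph_le : ph / n%:R <= c j * x j.
  rewrite -ler_pdivrMl // (_ : (c j)^-1 * (ph / n%:R) = ph / (n%:R * c j)) ?x_above //.
  by field; rewrite cj_neq0 n_neq0.
have O_le : O / n%:R <= Num.max ph O / n%:R.
  by apply: ler_wpM2r; [rewrite invr_ge0 ltW | rewrite le_max lexx orbT].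
by rewrite mulrBr floorE mulrBl; lra.
Qed.

Section DyadicLevels.
(* K dyadic levels L_k = Os / 2^k with targets WW k; the floor of level k is the
   floor of cost L_(k+1). *)
Variables (K : nat) (WW : nat -> 'I_n -> R).
Hypotheses (WW_ge0 : forall k, nonneg (WW k))
  (WW_cost : forall k, dotv c (WW k) <= 8 * (Os / 2 ^+ k))
  (WW_covers : forall k t, (t < size s)%N -> OPT c (take t.+1 s) <= Os / 2 ^+ k ->
     4 <= dotv (rowi s t) (WW k))
  (K_large : Os / 2 ^+ K < alpha1 c (head (fun=> 0) s)).

Let MM k j := Os / 2 ^+ k.+1 / (n%:R * c j).
Let Phi := total_pot c K WW MM.

Lemma levels_admissible k : admissible (WW k) (MM k).
Proof.
split => // j; apply: divr_gt0; last exact: mulr_gt0.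
by apply: divr_gt0; [exact: OPT_gt0 | exact: exprn_gt0].
Qed.

(* Level k contributes at most c(W_k) ln (16 n) <= 8 L_k ln (16 n), since its
   target is within a factor 16 n of its floor; the levels sum geometrically. *)
Lemma total_pot_le x : Phi x <= 16 * Os * ln (16 * n%:R).
Proof.
have n_ge1 : 1 <= n%:R :> R by rewrite ler1n -(ltr0n R).
have n16_ge1 : 1 <= 16 * n%:R :> R by lra.
have ln_ge0' : 0 <= ln (16 * n%:R : R) := ln_ge0 n16_ge1.
rewrite /Phi /total_pot.
apply: (le_trans (y := \sum_(k < K) 8 * (Os / 2 ^+ k) * ln (16 * n%:R))).
  apply: ler_sum => k _.
  have WW_le j : WW k j <= 16 * n%:R * MM k j.
    rewrite -(ler_pM2l (c_gt0 j)).
    have -> : c j * (16 * n%:R * MM k j) = 8 * (Os / 2 ^+ k).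
      by rewrite /MM exprS; field; rewrite expf_neq0 // ?lt0r_neq0.
    apply: (le_trans _ (WW_cost k)); apply: dotv_term_le (WW_ge0 k) => i.
    exact: ltW.
  apply: (le_trans (level_pot_le_ln c_gt0 x (levels_admissible k) WW_le n16_ge1)).
  by apply: ler_wpM2r => //; exact: WW_cost.
rewrite -mulr_suml -mulr_sumr -mulr_sumr; apply: ler_wpM2r => //.
by have := geom_sum_le R K; have := OPT_gt0; nra.
Qed.

(* A violated round costs at most the raise of the floor budget from ph to
   max(ph, O) plus three times the drop of Phi: the row's dyadic band k gives a
   level whose target over-covers it and whose floor lies below the raised point. *)
Lemma violated_round_cost t ph : (t < size s)%N ->
  ~~ (1 <= dotv (rowi s t) (sol c s t)) ->
  (forall j, ph / (n%:R * c j) <= sol c s t j) ->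
  dotv c (sol c s t.+1) - dotv c (sol c s t) <=
    Num.max ph (OPT c (take t.+1 s)) - ph + 3 * (Phi (sol c s t) - Phi (sol c s t.+1)).
Proof.
move=> lt_ts violated above.
have [solE _ below2 O_gt0 floor_le] := sol_violated_round valid lt_ts violated.
set O := OPT c (take t.+1 s) in solE below2 O_gt0 floor_le *.
set y := raise_floor c O (sol c s t) in solE below2 floor_le.
have [k [lt_kK O_gt O_le]] := dyadic_band (alpha1_head_gt0 valid s_gt0)
  (alpha1_le_OPT valid (ltn0Sn t) s_gt0) (OPT_prefix_le lt_ts) K_large.
have aW_ge4 : 4 <= dotv (rowi s t) (WW k) by exact: WW_covers.
have My : vle (MM k) y.
  move=> j; apply: le_trans (floor_le j); apply: ler_wpM2r; last exact: ltW.
  by rewrite invr_ge0 mulr_ge0 // ltW.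
have run := total_pot_run c_gt0 (valid_row_ge0 valid t) levels_admissible lt_kK My aW_ge4 below2.
rewrite -solE in run.
have floor_cost := raise_floor_cost O above; rewrite -/y in floor_cost.
have Phi_y : Phi y <= Phi (sol c s t).
  by apply: (total_pot_antitone c_gt0 K levels_admissible); exact: raise_floor_ge.
rewrite /Phi in Phi_y *; lra.
Qed.

Lemma cost_invariant t : (t <= size s)%N -> exists ph, [/\ 0 <= ph, ph <= Os,
    (forall j, ph / (n%:R * c j) <= sol c s t j) &
    dotv c (sol c s t) <= ph + 3 * (Phi (sol c s 0) - Phi (sol c s t))].
Proof.
elim: t => [_|t IH lt_ts].
  exists 0; split => //; first exact: ltW OPT_gt0.
    by move=> j; rewrite mul0r.
  by rewrite subrr mulr0 addr0 /= dotv0.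
have [ph [ph_ge0 ph_le floor_ph cost_t]] := IH (ltnW lt_ts).
have [covered|violated] := boolP (1 <= dotv (rowi s t) (sol c s t)).
  by exists ph; rewrite sol_covered_round.
have [solE _ _ _ floor_O] := sol_violated_round valid lt_ts violated.
exists (Num.max ph (OPT c (take t.+1 s))); split.
- by rewrite le_max ph_ge0.
- by rewrite ge_max ph_le OPT_prefix_le.
- move=> j; have [ph_le_O|O_lt_ph] := leP ph (OPT c (take t.+1 s)).
    apply: (le_trans (floor_O j)).
    rewrite solE; apply: iter_step_ge => //; first exact: (valid_row_ge0 valid _).
    by move=> i; apply: le_trans (sol_ge0 valid t i) (raise_floor_ge _ _ _ i).
  apply: (le_trans (floor_ph j)).
  exact: (sol_mono valid (leqnSn t) j).
- by have := violated_round_cost lt_ts violated floor_ph; lra.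
Qed.

(* Phi is nonnegative and starts below 16 Os ln (16 n); the final floor budget is
   at most Os. *)
Lemma cost_bound_levels : dotv c (sol c s (size s)) <= Os * (1 + 48 * ln (16 * n%:R)).
Proof.
have [ph [_ ph_le _ cost_m]] := cost_invariant (leqnn (size s)).
have := total_pot_ge0 c_gt0 K levels_admissible (sol c s (size s)).
have := total_pot_le (sol c s 0).
rewrite /Phi in cost_m *; lra.
Qed.

End DyadicLevels.

Lemma cost_bound : dotv c (sol c s (size s)) <= Os * (1 + 48 * ln (16 * n%:R)).
Proof.
have [K K_large] := dyadic_below Os (alpha1_head_gt0 valid s_gt0).
have targets k := level_target (divr_gt0 OPT_gt0 (exprn_gt0 k (ltr0Sn R 1))).
have [WW WW_spec] := choice targets.
apply: (@cost_bound_levels K WW _ _ _ K_large) => [k|k|k]; by case: (WW_spec k).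
Qed.

End CostAnalysis.

Definition log_volume {R : realType} {n} (x : 'I_n -> R) : R := \sum_(j < n) ln (x j).

Section LogVolume.
Variables (R : realType) (n : nat).
Implicit Types (a x y : 'I_n -> R).

Lemma log_volume_double x y j : (forall j, 0 < x j) -> vle x y -> 2 * x j <= y j ->
  log_volume x + ln 2 <= log_volume y.
Proof.
move=> x_gt0 xy doubled; rewrite /log_volume (bigD1 j) //= (bigD1 j (P := xpredT)) //=.
have others : \sum_(i < n | i != j) ln (x i) <= \sum_(i < n | i != j) ln (y i).
  by apply: ler_sum => i _; apply: ln_le.
have := ln_le (mulr_gt0 (ltr0Sn R 1) (x_gt0 j)) doubled.
by rewrite lnM ?posrE //; lra.
Qed.

Lemma some_coordinate_doubles a x y : nonneg a -> nonneg x ->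
  dotv a x < 1 -> 2 <= dotv a y -> exists j, 2 * x j <= y j.
Proof.
move=> a_ge0 x_ge0 ax_lt1 ay_ge2.
have [//|none] := pselect (exists j, 2 * x j <= y j).
have y_le : vle y (fun j => 2 * x j).
  by move=> j; rewrite leNgt; apply/negP => lt_j; apply: none; exists j; exact: ltW.
by have := dotv_le a_ge0 y_le; rewrite dotv_scale; lra.
Qed.

End LogVolume.

(* ln 2 >= 1/2, from ln (1 + e) >= e / (1 + e) at e = 1. *)
Lemma ln2_ge_half (R : realType) : 2^-1 <= ln (2 : R).
Proof. by have := ln1D_ge (ler01 : (0:R) <= 1); rewrite mul1r (_ : 1 + 1 = 2 :> R). Qed.

Section UpdateCount.
Variables (R : realType) (n : nat) (c : 'I_n -> R) (s : seq ('I_n -> R)).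
Hypotheses (valid : valid_instance c s) (s_gt0 : (0 < size s)%N).
Let c_gt0 := valid_c_gt0 valid.
Let n_gt0 := valid_n_gt0 valid s_gt0.
Let alpha := alpha1 c (head (fun=> 0) s).
Let alpha_gt0 : 0 < alpha := alpha1_head_gt0 valid s_gt0.

Definition violated t := ~~ (1 <= dotv (rowi s t) (sol c s t)).

Lemma num_updatesE : num_updates (@covering_alg R) c s = (\sum_(t < size s) violated t)%N.
Proof.
rewrite /num_updates -sum1_card big_mkcond /=; apply: eq_bigr => t _.
rewrite /in_mem /= /in_set !asboolb covering_alg_take ?(ltnW (ltn_ord t)) //.
by rewrite /violated -ltNge; case: (_ < 1).
Qed.

Lemma sol_one_above j : alpha / (n%:R * c j) <= sol c s 1 j.
Proof.
have violated0 : violated 0 by rewrite /violated /= dotv0 -ltNge ltr01.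
have [solE _ _ _ floor_le] := sol_violated_round valid s_gt0 violated0.
apply: (le_trans (y := OPT c (take 1 s) / (n%:R * c j))).
  apply: ler_wpM2r; first by rewrite invr_ge0 mulr_ge0 // ltW.
  exact: (alpha1_le_OPT valid (ltn0Sn 0) s_gt0).
apply: (le_trans (floor_le j)); rewrite solE; apply: iter_step_ge => //.
  exact: (valid_row_ge0 valid _).
by move=> i; apply: le_trans (sol_ge0 valid 0 i) (raise_floor_ge _ _ _ i).
Qed.

Lemma sol_gt0 t j : (0 < t)%N -> 0 < sol c s t j.
Proof.
move=> t_gt0; apply: lt_le_trans (le_trans (sol_one_above j) (sol_mono valid t_gt0 j)).
by rewrite divr_gt0 // mulr_gt0.
Qed.

Lemma log_volume_growth t : (0 < t)%N -> (t <= size s)%N ->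
  ln 2 * ((\sum_(i < t) violated i)%N%:R - 1) <= log_volume (sol c s t) - log_volume (sol c s 1).
Proof.
elim: t => [//|[|t] IH] _ le_ts.
  by rewrite big_ord1; case: (violated 0); rewrite ?subrr ?mulr0 // sub0r mulrN1 oppr_le0 ln_ge0 ?ler1n.
have {}IH := IH (ltn0Sn t) (ltnW le_ts).
rewrite big_ord_recr natrD.
have [viol|covered] := boolP (violated t.+1); last first.
  by rewrite sol_covered_round ?(negbNE covered) // (_ : false%:R = 0 :> R) // addr0.
have [_ covers2 _ _ _] := sol_violated_round valid le_ts viol.
have below1 : dotv (rowi s t.+1) (sol c s t.+1) < 1 by rewrite ltNge.
have [j doubled] :=
  some_coordinate_doubles (valid_row_ge0 valid t.+1) (sol_ge0 valid t.+1) below1 covers2.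
have := log_volume_double (fun i => sol_gt0 i (ltn0Sn t)) (sol_mono valid (leqnSn t.+1)) doubled.
by rewrite (_ : true%:R = 1 :> R) //; lra.
Qed.

(* Between round 1 and the end, coordinate j moves from >= alpha / (n c_j) to at most
   cost / c_j, so the volume grows by at most n ln (n cost / alpha). *)
Lemma log_volume_span : log_volume (sol c s (size s)) - log_volume (sol c s 1) <=
  n%:R * ln (n%:R * dotv c (sol c s (size s)) / alpha).
Proof.
set cost := dotv c _; set r := n%:R * cost / alpha.
have cj_x j : c j * sol c s (size s) j <= cost.
  by apply: dotv_term_le; [move=> i; exact: ltW | exact: sol_ge0].
have sumE : \sum_(j < n) (ln r + ln (sol c s 1 j)) = n%:R * ln r + log_volume (sol c s 1).
  by rewrite big_split sumr_const card_ord mulr_natl.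
suff : log_volume (sol c s (size s)) <= \sum_(j < n) (ln r + ln (sol c s 1 j)).
  by rewrite sumE; lra.
apply: ler_sum => j _.
have x1_gt0 := sol_gt0 j (ltn0Sn 0).
have cost_gt0 : 0 < cost by apply: lt_le_trans (cj_x j); rewrite mulr_gt0 ?sol_gt0.
rewrite -lnM ?posrE ?divr_gt0 ?mulr_gt0 //; apply: ln_le; first exact: sol_gt0.
apply: (le_trans (y := cost / c j)); first by rewrite ler_pdivlMr // mulrC.
apply: (le_trans (y := r * (alpha / (n%:R * c j)))); last first.
  by apply: ler_wpM2l; [rewrite ltW // divr_gt0 ?mulr_gt0 | exact: sol_one_above].
by rewrite /r le_eqVlt; apply/orP; left; apply/eqP; field; rewrite !lt0r_neq0.
Qed.

(* Number of updates: ln 2 (U - 1) <= n ln (n cost / alpha1), with ln 2 >= 1/2. *)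
Lemma count_bound : (num_updates (@covering_alg R) c s)%:R <=
  1 + 2 * n%:R * ln (n%:R * dotv c (sol c s (size s)) / alpha).
Proof.
have := log_volume_growth s_gt0 (leqnn _); have := log_volume_span.
have := ln2_ge_half R; rewrite num_updatesE.
have : 1 <= (\sum_(t < size s) violated t)%N%:R :> R.
  by rewrite ler1n (bigD1 (Ordinal s_gt0)) //= /violated /= dotv0 -ltNge ltr01.
set U := (\sum_(t < size s) violated t)%N%:R; set L := ln (n%:R * _ / alpha).
nra.
Qed.

End UpdateCount.

Section FinalArithmetic.
Variable R : realType.
Implicit Types (x O al cost U : R).

Lemma ln_le_sub1 x : 0 < x -> ln x <= x - 1.
Proof. by move=> x_gt0; have := @le_ln1Dx R (x - 1); rewrite [1 + _]addrC subrK; apply; lra. Qed.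

Lemma ln_16_mul_le x : 0 < x -> ln (16 * x) <= 15 + ln x.
Proof.
move=> x_gt0; rewrite lnM ?posrE //; apply: lerD => //.
by apply: (le_trans (ln_le_sub1 (ltr0n R 16))); lra.
Qed.

Lemma log_factor_le x : 1 <= x -> 1 + 48 * ln (16 * x) <= 2000 * (1 + ln x).
Proof.
move=> x_ge1; have := ln_16_mul_le (lt_le_trans ltr01 x_ge1).
by have := ln_ge0 x_ge1; lra.
Qed.

Lemma count_arith x O al cost U : 1 <= x -> 0 < O -> 0 < al -> O <= cost ->
  cost <= O * (1 + 48 * ln (16 * x)) -> U <= 1 + 2 * x * ln (x * cost / al) ->
  U <= 2000 * (x + `|ln O| + `|ln al^-1| + 1) ^+ 2.
Proof.
move=> x_ge1 O_gt0 al_gt0 O_le cost_le U_le.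
set B := 1 + 48 * ln (16 * x) in cost_le.
set Y := x + `|ln O| + `|ln al^-1| + 1.
have x_gt0 : 0 < x := lt_le_trans ltr01 x_ge1.
have ln16x := ln_16_mul_le x_gt0.
have B_ge1 : 1 <= B by rewrite /B; have := @ln_ge0 R (16 * x); lra.
have ln_ratio : ln (x * cost / al) <= ln x + ln O + ln B + ln al^-1.
  have : ln (x * cost / al) <= ln (x * (O * (B * al^-1))).
    apply: ln_le; first by rewrite divr_gt0 // mulr_gt0 // (lt_le_trans O_gt0).
    rewrite -mulrA; apply: ler_wpM2l; first lra.
    by rewrite mulrA; apply: ler_wpM2r; first rewrite invr_ge0 ltW.
  have B_gt0 : 0 < B := lt_le_trans ltr01 B_ge1.
  by rewrite !lnM ?posrE ?mulr_gt0 ?invr_gt0 //; lra.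
have ln_ratio_le : ln (x * cost / al) <= 720 * Y.
  have := ln_le_sub1 x_gt0; have := ln_le_sub1 (lt_le_trans ltr01 B_ge1).
  have := ler_norm (ln O); have := ler_norm (ln al^-1).
  have := normr_ge0 (ln O); have := normr_ge0 (ln al^-1).
  by rewrite /Y /B; lra.
have Y_ge1 : 1 <= Y by rewrite /Y; have := normr_ge0 (ln O); have := normr_ge0 (ln al^-1); lra.
have x_le_Y : x <= Y by rewrite /Y; have := normr_ge0 (ln O); have := normr_ge0 (ln al^-1); lra.
set L := ln _ in ln_ratio_le U_le.
have xL_le : x * L <= x * (720 * Y) by apply: ler_wpM2l; [exact: ltW | exact: ln_ratio_le].
have xY_le : x * Y <= Y * Y by apply: ler_wpM2r; [lra | exact: x_le_Y].
have YY_ge1 : 1 <= Y * Y by rewrite -[1]mulr1; apply: ler_pM.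
by rewrite expr2; lra.
Qed.

End FinalArithmetic.

Theorem theorem8 (R : realType) :
  exists (alg : online_alg R) (C : R) (k : nat), 0 < C /\
  forall (n : nat) (c : 'I_n -> R) (s : seq ('I_n -> R)),
    valid_instance c s -> (0 < size s)%N ->
    let x := fun t : nat => alg n c (take t s) in
    let m := size s in
    (* nonnegativity *)
    (forall t j, (t <= m)%N -> 0 <= x t j) /\
    (* monotonicity: coordinates never decrease *)
    (forall t j, (t < m)%N -> x t j <= x t.+1 j) /\
    (* after round t, all arrived constraints are satisfied *)
    (forall t, (t <= m)%N -> feasible (take t s) (x t)) /\
    (* an update happens only on a violated constraint *)
    (forall t, (t < m)%N -> 1 <= dotv (nth (fun=> 0) s t) (x t) -> x t.+1 = x t) /\
    (* competitive ratio O(log n) *)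
    dotv c (x m) <= C * (1 + ln (n%:R)) * OPT c s /\
    (* number of updates poly(n, log OPT, log (1/alpha_1)) *)
    (num_updates alg c s)%:R <=
      C * (n%:R + `|ln (OPT c s)| + `|ln (alpha1 c (head (fun=> 0) s))^-1| + 1) ^+ k.
Proof.
exists (@covering_alg R), 2000, 2%N; split => [|n c s valid s_gt0 x m]; first lra.
have xE t : (t <= m)%N -> x t = sol c s t by exact: covering_alg_take.
have n_ge1 : 1 <= n%:R :> R by rewrite ler1n -(ltr0n R) (valid_n_gt0 valid s_gt0).
have OPT_le_cost : OPT c s <= dotv c (sol c s m).
  by rewrite -{1}(take_size s); apply: OPT_le (valid_c_gt0 valid) _ _ (sol_feasible valid _).
split; first by move=> t j le_tm; rewrite xE //; exact: sol_ge0.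
split; first by move=> t j lt_tm; rewrite !xE ?(ltnW lt_tm) //; exact: sol_mono.
split; first by move=> t le_tm; rewrite xE //; exact: sol_feasible.
split; first by move=> t lt_tm; rewrite !xE ?(ltnW lt_tm) //; exact: sol_covered_round.
split.
  rewrite xE // mulrC; apply: (le_trans (cost_bound valid s_gt0)).
  by apply: ler_wpM2l; [exact: ltW (OPT_gt0 valid s_gt0) | exact: log_factor_le].
apply: (count_arith n_ge1 (OPT_gt0 valid s_gt0) (alpha1_head_gt0 valid s_gt0) OPT_le_cost).
  exact: (cost_bound valid s_gt0).
exact: (count_bound valid s_gt0).
Qed.
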